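(* Let $0<\alpha<1/2$, $p=n^{-\alpha}$, fix an integer $l\ge 1$, set $m=\lfloor (n-1)/(l+2)\rfloor$, and fix (for each $n$) a family of pairwise disjoint sets of coordinates $A,B,C_1,\dots,C_l\subset\{1,\dots,n\}$, each of size $m$. Call a vertex $v$ of $H_{n,p}$ good if there are at least $2m$ distinct vertices $w$ such that $w$ differs from $v$ in exactly two coordinates, both belonging to $A$, and $d_{H_{n,p}}(v,w)=2$. Then, with probability tending to $1$ as $n\to\infty$, every vertex $v$ of $H_n$ has a good vertex $u$ that differs from $v$ in exactly one coordinate, that coordinate belonging to $B$.
   Context: $H_n$ is the hypercube graph on $\{0,1\}^n$ (vectors adjacent iff they differ in exactly one coordinate). $H_{n,p}$ is obtained from $H_n$ by Bernoulli bond percolation: each edge is kept independently with probability $p$; $d_{H_{n,p}}$ denotes the graph distance in $H_{n,p}$. *)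

From HB Require Import structures.
From mathcomp Require Import all_boot all_order all_algebra.
From mathcomp Require Import all_classical all_reals all_analysis.
Set Implicit Arguments. Unset Strict Implicit. Unset Printing Implicit Defensive.
Import Order.TTheory GRing.Theory Num.Theory.
Local Open Scope ring_scope.

Notation hvert n := {ffun 'I_n -> bool}.

Definition hdiff n (v w : hvert n) : {set 'I_n} := [set i | v i != w i].

Definition hadj n (v w : hvert n) : bool := #|hdiff v w| == 1%N.

Definition hedges n : {set {set hvert n}} :=
  [set e | [exists v : hvert n, exists w : hvert n, hadj v w && (e == [set v; w])]].

(* A percolation configuration is a subset S of the edges of H_n (the kept edges).
   Probability of an event under Bernoulli(p) bond percolation. *)
Definition perc_prob (R : realType) n (p : R) (E : pred {set {set hvert n}}) : R :=
  \sum_(S in powerset (hedges n) | E S)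
     p ^+ #|S| * (1 - p) ^+ (#|hedges n| - #|S|).

Definition walk n (S : {set {set hvert n}}) (k : nat) (v w : hvert n) : bool :=
  [exists s : k.-tuple (hvert n),
     path (fun x y => [set x; y] \in S) v s && (last v s == w)].

Definition dist_eq n (S : {set {set hvert n}}) (v w : hvert n) (k : nat) : bool :=
  walk S k v w && [forall j : 'I_k, ~~ walk S j v w].

Definition good n (m : nat) (A : {set 'I_n}) (S : {set {set hvert n}}) (v : hvert n) : bool :=
  (2 * m <= #|[set w : hvert n | [&& #|hdiff v w| == 2, hdiff v w \subset A
                                    & dist_eq S v w 2]]|)%N.

Definition event4 n (m : nat) (A B : {set 'I_n}) (S : {set {set hvert n}}) : bool :=
  [forall v : hvert n, exists u : hvert n,
     [&& #|hdiff v u| == 1%N, hdiff v u \subset B & good m A S u]].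

(* Split A into K "first" and K "second" blocks of s coordinates each.  A vertex u
   is good as soon as, for every first block k, some edge from u along block k is
   kept, and then, from the endpoint of that edge, some edge along every second
   block is kept: this gives K^2 >= 2m vertices at distance 2 from u differing from
   u inside A.  Each of these K + K s K requirements fails only if a fixed set of s
   edges is entirely absent, which has probability (1-p)^s.  If the event fails at
   v, then each of the m neighbours of v in a direction b in B is bad; the relevant
   edge sets for distinct b lie in disjoint subcubes (A and B are disjoint), so the
   failure probability at v is at most the product over b, and a union bound over v
   gives the bound 2^n (2 n^3 (1-p)^s)^m.  With s ~ sqrt (m/32) and p = n^-alpha,
   p s grows like a positive power of n, so (1-p)^s <= exp (-p s) is smaller than
   any power of n and the failure probability is O(1/n). *)

From HB Require Import structures.
From mathcomp Require Import all_boot all_order all_algebra.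
From mathcomp Require Import all_classical all_reals all_analysis.
From mathcomp Require Import ring lra zify.
Set Implicit Arguments. Unset Strict Implicit. Unset Printing Implicit Defensive.
Import Order.TTheory GRing.Theory Num.Theory.
Local Open Scope ring_scope.
Import numFieldNormedType.Exports.

Section Percolation.
Variables (R : realType) (n : nat) (p : R).
Local Notation config := {set {set hvert n}}.
Local Notation weight S := (p ^+ #|S| * (1 - p) ^+ (#|hedges n| - #|S|)).

Lemma perc_prob_absent (G : config) : G \subset hedges n ->
  perc_prob p (fun S => [disjoint G & S]) = (1 - p) ^+ #|G|.
Proof.
move=> sGE.
(* Expanding [\prod_e (F e + H e)] over subsets [S] of edges, the term of [S] is its
   weight if [S] lies in [hedges n] and avoids [G], and [0] otherwise. *)
pose F e : R := if (e \in hedges n) && (e \notin G) then p else 0.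
pose H e : R := if e \in hedges n then 1 - p else 1.
have := @bigA_distr R 0 1 *%R +%R _ F H.
have -> : \prod_e (F e + H e) = (1 - p) ^+ #|G|.
  rewrite (bigID [in G]) /= [X in _ * X]big1 ?mulr1; last first.
    move=> e /negbTE eG; rewrite /F /H eG andbT.
    by case: ifP => _; rewrite ?add0r // addrC subrK.
  rewrite -prodr_const; apply: eq_bigr => e eG.
  by rewrite /F /H eG andbF (fintype.subsetP sGE e eG) add0r.
move=> ->; rewrite /perc_prob.
rewrite [RHS](bigID (fun S : config => (S \in powerset (hedges n)) && [disjoint G & S])) /=.
rewrite [X in _ = _ + X]big1 ?addr0; last first.
  move=> S /negbTE HS.
  have [e eS He] : exists2 e, e \in S & ~~ ((e \in hedges n) && (e \notin G)).
    move: HS; rewrite powersetE.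
    case/nandP=> [/fintype.subsetPn [e eS eE]|/pred0Pn [e /andP [eG eS]]].
      by exists e => //; rewrite (negbTE eE).
    by exists e => //; move: eG => /= ->; rewrite andbF.
  by rewrite (bigD1 e) //= eS /F (negbTE He) mul0r.
apply: eq_bigr => S /andP [SE dGS].
have sSE : S \subset hedges n by rewrite -powersetE.
rewrite (bigID [in S]) /=; congr (_ * _).
  rewrite -prodr_const; apply: eq_bigr => e eS.
  by rewrite eS /F (fintype.subsetP sSE e eS) (disjointFl dGS eS).
rewrite (eq_bigr H); last by move=> e /negbTE ->.
rewrite -big_mkcondr /= prodr_const; congr (_ ^+ _).
rewrite -{1}(finset.setIidPr sSE) -cardsD.
by apply: eq_card => e; rewrite finset.in_setD.
Qed.

Lemma perc_weight_sum1 : \sum_(S in powerset (hedges n)) weight S = 1.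
Proof.
rewrite -[RHS](expr0 (1 - p)) -(@cards0 {set hvert n}).
rewrite -(perc_prob_absent (finset.sub0set _)); apply: eq_bigl => S.
by rewrite -setI_eq0 finset.set0I eqxx andbT.
Qed.

Lemma perc_probC (P : pred config) : perc_prob p P = 1 - perc_prob p (predC P).
Proof. by rewrite -perc_weight_sum1 (bigID P) /= addrK. Qed.

Hypothesis p01 : 0 <= p <= 1.

Lemma perc_weight_ge0 (S : config) : 0 <= weight S.
Proof. by case/andP: p01 => p0 p1; rewrite mulr_ge0 ?exprn_ge0 ?subr_ge0. Qed.

Lemma perc_prob_ge0 (P : pred config) : 0 <= perc_prob p P.
Proof. by apply: sumr_ge0 => S _; apply: perc_weight_ge0. Qed.

Lemma perc_prob_union_bound (I : finType) (P : pred config) (Q : I -> pred config) :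
  (forall S : config, S \subset hedges n -> P S -> exists i, Q i S) ->
  perc_prob p P <= \sum_i perc_prob p (Q i).
Proof.
move=> PQ; rewrite /perc_prob.
rewrite (eq_bigr (fun i => \sum_(S in powerset (hedges n)) if Q i S then weight S else 0));
  last by move=> i _; rewrite big_mkcondr.
rewrite exchange_big /= big_mkcondr /=; apply: ler_sum => S SE.
have weight_if_ge0 i : 0 <= (if Q i S then weight S else 0).
  by case: ifP => _; rewrite ?perc_weight_ge0.
case PS: (P S); last by apply: sumr_ge0.
have [i QiS] : exists i, Q i S by apply: PQ; rewrite // -powersetE.
by rewrite (bigD1 i) //= QiS lerDl; apply: sumr_ge0.
Qed.

(* Proved by iterating the union bound over the choice of an absent family for each [b]. *)
Lemma perc_prob_absent_families (I J : finType) (F : I -> J -> config)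
    (bs : seq I) (G : config) :
  uniq bs -> G \subset hedges n -> (forall b j, F b j \subset hedges n) ->
  (forall b j, b \in bs -> [disjoint G & F b j]) ->
  {in bs &, forall b b', b != b' -> forall j j', [disjoint F b j & F b' j']} ->
  perc_prob p (fun S => [disjoint G & S] && all (fun b => [exists j, [disjoint F b j & S]]) bs)
  <= (1 - p) ^+ #|G| * \prod_(b <- bs) \sum_j (1 - p) ^+ #|F b j|.
Proof.
elim: bs G => [|b0 bs IH] G /= ubs sGE sFE dGF dFF.
  rewrite big_nil mulr1 -(perc_prob_absent sGE) /perc_prob.
  by under eq_bigl => S do rewrite andbT.
case/andP: ubs => b0bs ubs.
have disjointUl (X Y S : config) :
    [disjoint X :|: Y & S] = [disjoint X & S] && [disjoint Y & S].
  by rewrite -!setI_eq0 finset.setIUl finset.setU_eq0.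
apply: le_trans (@perc_prob_union_bound J _ (fun j S => [disjoint G :|: F b0 j & S] &&
    all (fun b => [exists j, [disjoint F b j & S]]) bs) _) _.
  move=> S _ /andP [dGS /andP [/existsP [j dFS] allbs]].
  by exists j; rewrite disjointUl dGS dFS.
rewrite big_cons mulrA mulr_sumr mulr_suml; apply: ler_sum => j _.
apply: le_trans (IH _ ubs _ sFE _ _) _.
- by rewrite finset.subUset sGE sFE.
- move=> b j' bbs; rewrite disjointUl dGF ?inE ?bbs ?orbT //=.
  by apply: dFF; rewrite ?inE ?bbs ?eqxx ?orbT //; apply: contraNneq b0bs => ->.
- by move=> b b' bbs b'bs; apply: dFF; rewrite inE ?bbs ?b'bs orbT.
have /disjoint_setI0 GF0 := dGF b0 j (mem_head _ _).
by rewrite cardsU GF0 cards0 subn0 exprD.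
Qed.

End Percolation.

Section Hypercube.
Variable n : nat.
Local Notation vert := (hvert n).

Definition hflip (u : vert) (c : 'I_n) : vert := [ffun i => if i == c then ~~ u i else u i].

Lemma hflipE (u : vert) c i : hflip u c i = if i == c then ~~ u i else u i.
Proof. by rewrite ffunE. Qed.

Lemma hdiffC (u w : vert) : hdiff u w = hdiff w u.
Proof. by apply/setP => i; rewrite !inE eq_sym. Qed.

Lemma hdiffvv (u : vert) : hdiff u u = finset.set0.
Proof. by apply/setP => i; rewrite !inE eqxx. Qed.

Lemma hdiff_hflip (u : vert) c : hdiff u (hflip u c) = [set c].
Proof. by apply/setP => i; rewrite !inE hflipE; case: (i == c); case: (u i). Qed.

Lemma hdiff_hflip2 (u : vert) c d : c != d -> hdiff u (hflip (hflip u c) d) = [set c; d].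
Proof.
move=> cd; apply/setP => i; rewrite !inE !hflipE.
case: (eqVneq i d) => [->|_]; first by rewrite orbT [d == c]eq_sym (negbTE cd); case: (u d).
by rewrite orbF; case: (i == c); case: (u i).
Qed.

Lemma hflip_inj (u : vert) : injective (hflip u).
Proof.
move=> c d /(congr1 (hdiff u)); rewrite !hdiff_hflip => /setP /(_ c).
by rewrite !inE eqxx => /esym /eqP.
Qed.

Lemma hflip_edge_in_hedges (u : vert) c : [set u; hflip u c] \in hedges n.
Proof.
rewrite inE; apply/existsP; exists u; apply/existsP; exists (hflip u c).
by rewrite /hadj hdiff_hflip cards1 !eqxx.
Qed.

Lemma hflip_edge_inj (u : vert) : injective (fun c => [set u; hflip u c]).
Proof.
move=> c d /= /setP /(_ (hflip u c)); rewrite !inE eqxx orbT /=.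
have -> : (hflip u c == u) = false.
  apply/negbTE/eqP => ucu; have := hdiff_hflip u c.
  by rewrite ucu hdiffvv => /setP /(_ c); rewrite !inE eqxx.
by move=> /esym /eqP /hflip_inj.
Qed.

Lemma hadj_of_hedge (x y : vert) : [set x; y] \in hedges n -> hadj x y.
Proof.
rewrite inE => /existsP [v /existsP [w /andP [hvw /eqP exy]]].
have vw : v != w by apply: contraTneq hvw => ->; rewrite /hadj hdiffvv cards0.
have [xvw yvw] : x \in [set v; w] /\ y \in [set v; w] by rewrite -exy set21 set22.
have [vxy wxy] : v \in [set x; y] /\ w \in [set x; y] by rewrite exy set21 set22.
move: xvw yvw vxy wxy; rewrite !inE => /orP [] /eqP -> /orP [] /eqP -> //.
- by rewrite orbb eq_sym (negbTE vw).
- by rewrite /hadj hdiffC.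
- by rewrite orbb (negbTE vw).
Qed.

Lemma dist_eq2 (S : {set {set vert}}) (u x w : vert) :
  S \subset hedges n -> #|hdiff u w| = 2%N ->
  [set u; x] \in S -> [set x; w] \in S -> dist_eq S u w 2.
Proof.
move=> SE uw2 ux xw; apply/andP; split.
  by apply/existsP; exists [tuple x; w]; rewrite /= ux xw /=.
apply/forallP => -[[|[|j]] //= _]; apply/negP => /existsP [t].
  by rewrite (tuple0 t) /= => /eqP wu; move: uw2; rewrite wu hdiffvv cards0.
case: t => [[|y []] //= _] /andP [/andP [uy _] /eqP yw].
by move: (fintype.subsetP SE _ uy) => /hadj_of_hedge; rewrite yw /hadj uw2.
Qed.

End Hypercube.

Section WitnessEdges.
Variables (n : nat) (A : {set 'I_n}) (K s : nat).
Variable blk : 'I_K * 'I_s + 'I_K * 'I_s -> 'I_n.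
Hypotheses (blk_inA : forall x, blk x \in A) (blk_inj : injective blk).
Local Notation vert := (hvert n).
Local Notation index := ('I_K + 'I_K * 'I_s * 'I_K)%type.

(* [blk] splits [A] into blocks of [s] coordinates, [K] "first" blocks [blk (inl (k, _))]
   and [K] "second" blocks [blk (inr (l, _))]. [witness_edges u (inl k)] are the edges
   from [u] along the first block [k]; [witness_edges u (inr (k, i, l))] are the edges
   along the second block [l] from the neighbour of [u] in direction [blk (inl (k, i))]. *)
Definition witness_edges (u : vert) (j : index) : {set {set vert}} :=
  match j with
  | inl k => [set [set u; hflip u (blk (inl (k, i)))] | i : 'I_s]
  | inr (k, i, l) =>
      let x := hflip u (blk (inl (k, i))) in
      [set [set x; hflip x (blk (inr (l, i')))] | i' : 'I_s]
  end.

Lemma card_witness_edges (u : vert) j : #|witness_edges u j| = s.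
Proof.
by case: j => [k|[[k i] l]]; rewrite card_imset ?card_ord // =>
  i1 i2 /hflip_edge_inj /blk_inj [].
Qed.

Lemma witness_edges_sub (u : vert) j : witness_edges u j \subset hedges n.
Proof.
by apply/fintype.subsetP => e; case: j => [k|[[k i] l]] /imsetP [i' _ ->];
  apply: hflip_edge_in_hedges.
Qed.

Lemma witness_edges_disjoint (u u' : vert) j j' c :
  c \notin A -> u c != u' c -> [disjoint witness_edges u j & witness_edges u' j'].
Proof.
move=> cA uu'; have hflip_c (y : vert) d : hflip y (blk d) c = y c.
  by rewrite hflipE; case: eqP => // ec; move: cA; rewrite ec blk_inA.
have vertex_c (w : vert) jw e x : e \in witness_edges w jw -> x \in e -> x c = w c.
  by case: jw => [k|[[k i] l]] /imsetP [i' _ ->]; rewrite !inE => /orP [] /eqP ->;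
    rewrite ?hflip_c.
apply/pred0P => e /=; apply/negP => /andP [eu eu'].
have [x xe] : exists x, x \in e.
  by case: j eu {eu'} => [k|[[k i] l]] /imsetP [i' _ ->]; eexists; apply: set21.
by move: uu'; rewrite -(vertex_c _ _ _ _ eu xe) -(vertex_c _ _ _ _ eu' xe) eqxx.
Qed.

Lemma good_of_witness_edges m (S : {set {set vert}}) (u : vert) :
  S \subset hedges n -> (2 * m <= K * K)%N ->
  (forall j, ~~ [disjoint witness_edges u j & S]) -> good m A S u.
Proof.
move=> SE Km hS.
have kept k : exists i, [set u; hflip u (blk (inl (k, i)))] \in S.
  have /pred0Pn [e /andP [/= /imsetP [i _ ->] eS]] := hS (inl k).
  by exists i.
have [c hc] := fin_all_exists kept.
pose x k := hflip u (blk (inl (k, c k))).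
have kept2 (kl : 'I_K * 'I_K) :
    exists i, [set x kl.1; hflip (x kl.1) (blk (inr (kl.2, i)))] \in S.
  have /pred0Pn [e /andP [/= /imsetP [i _ ->] eS]] := hS (inr (kl.1, c kl.1, kl.2)).
  by exists i.
have [d hd] := fin_all_exists kept2.
pose w kl := hflip (x kl.1) (blk (inr (kl.2, d kl))).
have hdiff_w kl : hdiff u (w kl) = [set blk (inl (kl.1, c kl.1)); blk (inr (kl.2, d kl))].
  by rewrite hdiff_hflip2 // (inj_eq blk_inj).
have w_inj : injective w.
  move=> [k l] [k' l'] /(congr1 (hdiff u)); rewrite !hdiff_w /= => e.
  have : blk (inl (k, c k)) \in hdiff u (w (k', l')) by rewrite hdiff_w -e set21.
  rewrite hdiff_w !inE !(inj_eq blk_inj) /= orbF => /eqP [-> _].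
  have : blk (inr (l, d (k, l))) \in hdiff u (w (k', l')) by rewrite hdiff_w -e set22.
  by rewrite hdiff_w !inE !(inj_eq blk_inj) /= => /eqP [-> _].
rewrite /good; apply: leq_trans Km _.
have -> : (K * K)%N = #|[set: 'I_K * 'I_K]| by rewrite cardsT card_prod card_ord.
rewrite -(card_imset _ w_inj).
apply: subset_leq_card; apply/fintype.subsetP => _ /imsetP [[k l] _ ->].
have w2 : #|hdiff u (w (k, l))| = 2%N by rewrite hdiff_w cards2 (inj_eq blk_inj).
rewrite inE w2 eqxx hdiff_w finset.subUset !finset.sub1set !blk_inA /=.
exact: dist_eq2 (hc k) (hd (k, l)).
Qed.

End WitnessEdges.

Lemma perc_prob_not_event4_le (R : realType) (p : R) n m (A B : {set 'I_n}) K s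
    (blk : 'I_K * 'I_s + 'I_K * 'I_s -> 'I_n) :
  0 <= p <= 1 -> #|B| = m -> [disjoint A & B] ->
  (forall x, blk x \in A) -> injective blk -> (2 * m <= K * K)%N ->
  perc_prob p (predC (event4 m A B)) <= (2 ^ n)%:R * ((1 - p) ^+ s *+ (K + K * s * K)) ^+ m.
Proof.
move=> p01 cardB dAB blk_inA blk_inj Km.
pose F (v : hvert n) b := witness_edges blk (hflip v b).
have disj0 (S : {set {set hvert n}}) : [disjoint finset.set0 & S].
  by rewrite -setI_eq0 finset.set0I.
apply: le_trans (@perc_prob_union_bound _ _ _ p01 (hvert n) _ (fun v S =>
    [disjoint finset.set0 & S] && all (fun b => [exists j, [disjoint F v b j & S]]) (enum B)) _) _.
  move=> S SE /forallPn [v /existsPn v_bad]; exists v; rewrite disj0 /=.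
  apply/allP => b; rewrite mem_enum => bB; apply: contraT => /existsPn kept.
  have := v_bad (hflip v b); rewrite hdiff_hflip cards1 eqxx finset.sub1set bB /=.
  by rewrite (good_of_witness_edges blk_inA blk_inj SE Km kept).
set Y := _ ^+ m; have -> : (2 ^ n)%:R * Y = \sum_(v : hvert n) Y.
  by rewrite sumr_const card_ffun card_bool card_ord mulr_natl.
apply: ler_sum => v _.
apply: le_trans (perc_prob_absent_families (F := F v) p01 (enum_uniq _)
  (finset.sub0set _) _ _ _) _.
- by move=> b j; apply: witness_edges_sub.
- by move=> b j _; apply: disj0.
- move=> b b' /[!mem_enum] bB b'B bb' j j'.
  apply: (witness_edges_disjoint blk_inA j j' (c := b)); first by rewrite (disjointFl dAB bB).
  by rewrite !hflipE eqxx (negbTE bb'); case: (v b).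
rewrite cards0 expr0 mul1r big_enum /= (eq_bigr (fun=> (1 - p) ^+ s *+ (K + K * s * K))).
  by rewrite prodr_const cardB.
move=> b _; rewrite (eq_bigr (fun=> (1 - p) ^+ s)) => [|j _]; last first.
  by rewrite /F card_witness_edges.
by rewrite sumr_const card_sum !card_prod !card_ord.
Qed.

Section Decay.
Variable R : realType.

Lemma powRN_in01 (a x : R) : 0 <= a -> 1 <= x -> 0 <= x `^ (- a) <= 1.
Proof.
move=> a0 x1; rewrite powR_ge0 -[leRHS](powRr0 x).
by apply: ler_powR => //; rewrite oppr_le0.
Qed.

Lemma expR_ge_expn_div_fact (y : R) k : 0 <= y -> y ^+ k / k`!%:R <= expR y.
Proof.
move=> y0; case: k => [|k].
  by rewrite expr0 fact0 divr1; apply: le_trans (expR_ge1Dx y); rewrite lerDl.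
by apply: le_trans (expR_ge1Dxn k y0); rewrite lerDr.
Qed.

Lemma expn_one_sub_le_expR (p : R) s : p <= 1 -> (1 - p) ^+ s <= expR (- (p * s%:R)).
Proof.
move=> p1; rewrite -mulNr expRM_natr.
by apply: lerXn2r; rewrite ?nnegrE ?subr_ge0 ?expR_ge0 // expR_ge1Dx.
Qed.

(* With [p = N^-a], [p s >= sqrt (N^(1-2a) / c)], and [exp (p s)] beats [N^4] by
   keeping the [2q]-th term of its series. *)
Lemma one_sub_powR_expn_le (a N c : R) (s q : nat) :
  0 < a -> 4 <= q%:R * (1 - 2 * a) -> 1 <= N -> N <= c * s%:R ^+ 2 ->
  (1 - N `^ (- a)) ^+ s * N ^+ 4 <= c ^+ q * (2 * q)`!%:R.
Proof.
move=> a0 qa N1 Ncs; have N0 : 0 < N by apply: lt_le_trans N1.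
set p := N `^ (- a); set y := p * s%:R.
have p0 : 0 < p by apply: powR_gt0.
have /andP [_ p1] : 0 <= p <= 1 by apply: powRN_in01 => //; exact: ltW.
have y0 : 0 <= y by rewrite /y mulr_ge0 ?ler0n ?ltW.
have c0 : 0 <= c.
  have : 0 <= s%:R ^+ 2 :> R by rewrite exprn_ge0.
  nra.
have decay : (1 - p) ^+ s * expR y <= 1.
  rewrite -[leRHS](mulVf (lt0r_neq0 (expR_gt0 y))) -expRN.
  by apply: ler_wpM2r; [exact: expR_ge0 | exact: expn_one_sub_le_expR].
have series : y ^+ (2 * q) <= (2 * q)`!%:R * expR y.
  by rewrite -ler_pdivrMl ?ltr0n ?fact_gt0 // mulrC expR_ge_expn_div_fact.
have growth : N ^+ 4 <= c ^+ q * y ^+ (2 * q).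
  have pN : p ^+ 2 * N = N `^ (1 - 2 * a).
    rewrite /p -powR_mulrn ?powR_ge0 // -powRrM -[X in _ * X](powRr1 (ltW N0)).
    rewrite -powRD; last by apply/implyP => _; rewrite gt_eqF.
    by apply: congr1; lra.
  apply: (@le_trans _ _ ((p ^+ 2 * N) ^+ q)).
    rewrite pN -(powR_mulrn _ (ltW N0)) -powR_mulrn ?powR_ge0 // -powRrM.
    by apply: ler_powR; rewrite // mulrC.
  have pN0 : 0 <= p ^+ 2 * N by rewrite mulr_ge0 ?exprn_ge0 ?ltW.
  rewrite exprM -exprMn; apply: lerXn2r; rewrite ?nnegrE //.
    by rewrite mulr_ge0 ?exprn_ge0.
  have -> : c * y ^+ 2 = p ^+ 2 * (c * s%:R ^+ 2) by rewrite /y; ring.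
  by rewrite ler_wpM2l // exprn_ge0 // ltW.
have decay0 : 0 <= (1 - p) ^+ s by rewrite exprn_ge0 // subr_ge0.
apply: le_trans (ler_wpM2l decay0 growth) _.
apply: le_trans (ler_wpM2l decay0 (ler_wpM2l (exprn_ge0 _ c0) series)) _.
have -> : (1 - p) ^+ s * (c ^+ q * ((2 * q)`!%:R * expR y)) =
    c ^+ q * (2 * q)`!%:R * ((1 - p) ^+ s * expR y) by ring.
by rewrite -[leRHS]mulr1 ler_wpM2l // mulr_ge0 ?exprn_ge0.
Qed.

End Decay.

Lemma exists_inj_in (T U : finType) (A : {set U}) :
  (#|T| <= #|A|)%N -> exists2 f : T -> U, (forall x, f x \in A) & injective f.
Proof.
move=> TA; exists (fun x => enum_val (widen_ord TA (enum_rank x))) => [x|x y].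
  exact: enum_valP.
by move=> /enum_val_inj /(congr1 val) /= /ord_inj; apply: enum_rank_inj.
Qed.

Lemma exists_isqrt c m : (0 < c)%N -> exists s, (c * s * s <= m < c * s.+1 * s.+1)%N.
Proof.
move=> c0; elim: m => [|m [s /andP [lo hi]]]; first by exists 0%N; rewrite !muln1 muln0 c0.
case: (ltnP m.+1 (c * s.+1 * s.+1)) => hi'; first by exists s; rewrite hi' (leq_trans lo).
by exists s.+1; rewrite hi' /=; nia.
Qed.

(* [s] is about [sqrt (m / 32)] and [K = m / (2 s)]. *)
Lemma block_sizes m : (32 <= m)%N ->
  exists s K, [/\ (0 < s)%N, (2 * K * s <= m)%N, (2 * m <= K * K)%N & (m < 128 * s * s)%N].
Proof.
move=> m32; have [s /andP [lo hi]] := @exists_isqrt 32 m isT.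
have s0 : (0 < s)%N by case: s lo hi => //; lia.
exists s, (m %/ (2 * s))%N; split => //; last by nia.
  by rewrite mulnAC mulnC; apply: div.leq_divM.
set K := (m %/ (2 * s))%N.
have rem : (m %% (2 * s) < 2 * s)%N by rewrite ltn_pmod // muln_gt0.
have hm : m = (K * (2 * s) + m %% (2 * s))%N by rewrite /K -divn_eq.
have h1 : (15 * m <= 32 * s * K)%N by nia.
have h2 : (225 * 32 * (s * s) * m <= 1024 * (s * s) * (K * K))%N by nia.
have : ((s * s) * (2 * m) <= (s * s) * (K * K))%N by nia.
by rewrite leq_pmul2l // muln_gt0 s0.
Qed.

Lemma exp2_mul_succ_le l m n : (n <= (l + 2) * m.+1)%N ->
  (2 ^ n * n.+1 <= 2 ^ (l + 3) * (l + 2) * 2 ^ ((l + 4) * m))%N.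
Proof.
move=> nlm.
have h1 : (2 ^ n <= 2 ^ (l + 2) * 2 ^ ((l + 2) * m))%N by rewrite -expnD leq_pexp2l //; nia.
have h2 : (n.+1 <= 2 * (l + 2) * 2 ^ m)%N by have := ltn_expl m (isT : (1 < 2)%N); nia.
have -> : (2 ^ ((l + 4) * m) = 2 ^ ((l + 2) * m) * 2 ^ m * 2 ^ m)%N.
  by rewrite -!expnD; congr (_ ^ _)%N; nia.
have -> : (2 ^ (l + 3) = 2 * 2 ^ (l + 2))%N by rewrite -expnS addnS.
apply: leq_trans (leq_mul h1 h2) _.
have : (1 <= 2 ^ m)%N by rewrite expn_gt0.
nia.
Qed.

Section Estimate.
Variables (R : realType) (alpha : R) (l q : nat).
Hypotheses (alpha_gt0 : 0 < alpha) (q_large : 4 <= q%:R * (1 - 2 * alpha)).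
Local Notation threshold := (2 ^ (l + 5) * (256 * (l + 2)) ^ q * (2 * q)`!)%N.

Lemma witness_failure_le n s K :
  (threshold <= n)%N -> (n <= 256 * (l + 2) * (s * s))%N -> (K <= n)%N -> (s <= n)%N ->
  (1 - n%:R `^ (- alpha)) ^+ s *+ (K + K * s * K) * (2 ^ (l + 4))%:R <= 1 :> R.
Proof.
move=> n_large n_le_cs Kn sn.
have n0 : (0 < n)%N.
  by apply: leq_trans _ n_large; rewrite !muln_gt0 !expn_gt0 fact_gt0 muln_gt0 addn2.
set N : R := n%:R; have N0 : 0 < N by rewrite ltr0n.
have N1 : 1 <= N by rewrite ler1n.
set P := (1 - N `^ (- alpha)) ^+ s.
have P0 : 0 <= P.
  have /andP [_ p1] := powRN_in01 (ltW alpha_gt0) N1.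
  by rewrite exprn_ge0 // subr_ge0.
have decay : P * N ^+ 4 <= (256 * (l + 2))%:R ^+ q * (2 * q)`!%:R.
  apply: one_sub_powR_expn_le => //.
  by rewrite -(natrX R s 2) -natrM /N ler_nat; nia.
apply: (@le_trans _ _ (P * N ^+ 3 * (2 ^ (l + 5))%:R)).
  rewrite -mulr_natr -!mulrA /N -!natrM ler_wpM2l // ler_nat (addnS l 4) (expnS 2 (l + 4)).
  have Kss : (K * s * K <= n * (n * n))%N by rewrite mulnA !leq_mul.
  have Kn3 : (K <= n * (n * n))%N by apply: leq_trans Kn _; rewrite leq_pmulr // muln_gt0 n0.
  have cnt : (K + K * s * K <= 2 * (n * (n * n)))%N by lia.
  have -> : (n * (n * (n * (2 * 2 ^ (l + 4)))) = 2 * (n * (n * n)) * 2 ^ (l + 4))%N by ring.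
  by rewrite leq_mul.
rewrite -(ler_pM2l N0) mulr1.
have -> : N * (P * N ^+ 3 * (2 ^ (l + 5))%:R) = P * N ^+ 4 * (2 ^ (l + 5))%:R by ring.
apply: le_trans (ler_wpM2r (ler0n _ _) decay) _.
by rewrite -!natrX -!natrM ler_nat mulnC mulnA.
Qed.

Lemma not_event4_prob_le n (A B : {set 'I_n}) :
  let m := ((n - 1) %/ (l + 2))%N in
  (threshold <= n)%N -> (32 * (l + 2) < n)%N -> #|A| = m -> #|B| = m -> [disjoint A & B] ->
  perc_prob (n%:R `^ (- alpha)) (predC (event4 m A B)) * n.+1%:R
    <= (2 ^ (l + 3) * (l + 2))%:R :> R.
Proof.
move=> m n_large nl cardA cardB dAB.
have m32 : (32 <= m)%N by rewrite /m leq_divRL ?addn_gt0 ?orbT //; lia.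
have nm : (n <= (l + 2) * m.+1)%N.
  have l2 : (0 < l + 2)%N by rewrite addn2.
  by have := ltn_ceil (n - 1) l2; rewrite -/m; lia.
have [s [K [s0 KsA Km ms]]] := block_sizes m32.
have [blk blk_inA blk_inj] : exists2 blk : 'I_K * 'I_s + 'I_K * 'I_s -> 'I_n,
    (forall x, blk x \in A) & injective blk.
  by apply: exists_inj_in; rewrite card_sum !card_prod !card_ord cardA; nia.
set p : R := n%:R `^ (- alpha).
have p01 : 0 <= p <= 1 by apply: powRN_in01; [exact: ltW | rewrite ler1n; lia].
apply: le_trans (ler_wpM2r (ler0n _ _)
  (perc_prob_not_event4_le p01 cardB dAB blk_inA blk_inj Km)) _.
set X := (1 - p) ^+ s *+ _.
have X0 : 0 <= X by rewrite mulrn_wge0 // exprn_ge0 // subr_ge0; case/andP: p01.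
have Xm : X ^+ m * (2 ^ ((l + 4) * m))%:R <= 1.
  have X_small : X * (2 ^ (l + 4))%:R <= 1 by apply: witness_failure_le => //; nia.
  by rewrite expnM natrX -exprMn exprn_ile1 // mulr_ge0.
have -> : (2 ^ n)%:R * X ^+ m * n.+1%:R = X ^+ m * (2 ^ n * n.+1)%:R by rewrite natrM; ring.
have exp2_bound : (2 ^ n * n.+1)%:R <= (2 ^ (l + 3) * (l + 2) * 2 ^ ((l + 4) * m))%:R :> R.
  by rewrite ler_nat exp2_mul_succ_le.
apply: le_trans (ler_wpM2l (exprn_ge0 _ X0) exp2_bound) _.
by rewrite natrM mulrCA -[leRHS]mulr1 ler_wpM2l.
Qed.

End Estimate.

Theorem mainTheorem4 (R : realType) (alpha : R) (l : nat)
  (A B : forall n : nat, {set 'I_n}) (C : forall n : nat, 'I_l -> {set 'I_n}) :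
  0 < alpha -> alpha < 1 / 2 -> (1 <= l)%N ->
  (forall n : nat, let m := ((n - 1) %/ (l + 2))%N in
     [/\ #|A n| = m, #|B n| = m & forall i, #|C n i| = m]) ->
  (forall n : nat,
     [/\ [disjoint A n & B n],
         (forall i, [disjoint A n & C n i] /\ [disjoint B n & C n i])
       & forall i j, i != j -> [disjoint C n i & C n j]]) ->
  ((fun n : nat => perc_prob ((n%:R : R) `^ (- alpha))
                    (event4 ((n - 1) %/ (l + 2))%N (A n) (B n))) @ \oo --> (1 : R))%classic.
Proof.
(* Only the sizes of [A n], [B n] and their disjointness matter: the sets [C n i]
   and the bound [1 <= l] serve only to fix [m]. *)
move=> alpha_gt0 alpha_lt_half _ cardABC disjABC.
have [q q_large] : exists q : nat, 4 <= q%:R * (1 - 2 * alpha).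
  have ha : 0 < 1 - 2 * alpha by lra.
  exists (Num.Def.archi_bound (4 / (1 - 2 * alpha))).
  by rewrite -ler_pdivrMr // ltW // archi_boundP // divr_ge0 // ltW.
set C1 : R := (2 ^ (l + 3) * (l + 2))%:R.
apply: (squeeze_cvgr (f := fun n => 1 - C1 * harmonic n) (h := fun=> 1)); last 2 first.
- by rewrite -[X in (_ --> X)%classic](subr0 1) -(mulr0 C1); apply: cvgB; [exact: cvg_cst|
    apply: cvgM; [exact: cvg_cst | exact: cvg_harmonic]].
- exact: cvg_cst.
exists (maxn (2 ^ (l + 5) * (256 * (l + 2)) ^ q * (2 * q)`!) (32 * (l + 2)).+1) => // n /=.
rewrite geq_max => /andP [n_large nl].
have [cardA cardB _] := cardABC n; have [dAB _ _] := disjABC n.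
have Q_small := not_event4_prob_le alpha_gt0 q_large n_large nl cardA cardB dAB.
have n1 : 1 <= n%:R :> R by rewrite ler1n; lia.
have Q0 := perc_prob_ge0 (powRN_in01 (ltW alpha_gt0) n1)
  (predC (event4 ((n - 1) %/ (l + 2)) (A n) (B n))).
by rewrite perc_probC gerBl Q0 andbT lerD2l lerN2 ler_pdivlMr.
Qed.
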